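(* Let $\{G_i\}$ be a family of connected graphs with common induced subgraph $J$, embedded as $J_i\subseteq G_i$, such that $\{(G_i|J_i)\}$ is isometric, and let $H=\amalg\{(G_i|J_i)\}$. If, for every $i$, every traversal $T_i$ for $\parallel(J_i:G_i)$ contains a local metric basis for $G_i$, then $\dim_l(H)=\sum_i\dim_l(G_i)$.
   Context: $d$ is shortest-path distance (in $H$ unless otherwise stated). A vertex $w$ distinguishes an edge $uv$ if $d(w,u)\neq d(w,v)$. A local metric basis of $G$ is a minimum-size set of vertices such that every edge of $G$ is distinguished (with distances in $G$) by one of them; $\dim_l(G)$ is its size. $J$ is a common induced subgraph of each $G_i$ via injective maps $\iota_i:V(J)\to V(G_i)$ with $\iota_i(x)\iota_i(y)\in E(G_i)$ iff $xy\in E(J)$; $J_i$ is the induced image, $x^i=\iota_i(x)$. $H=\amalg\{(G_i|J_i)\}$ is obtained from the disjoint union of the $G_i$ by identifying, for each $x\in V(J)$, all $x^i$ into one vertex; each $G_i$ is a subgraph of $H$. The family is isometric if $d_{G_i}(a^i,b^i)=d_{G_j}(a^j,b^j)$ for all $i,j$, $a,b\in V(J)$. $\parallel(J_i:G_i)$ is the set of edges $uv$ of $G_i-J_i$ with $d_{G_i}(w,u)=d_{G_i}(w,v)$ for all $w\in V(J_i)$. A traversal for $\parallel(J_i:G_i)$ is a minimum-size set $T_i\subseteq V(G_i-J_i)$ such that every edge of $\parallel(J_i:G_i)$ is distinguished (distances in $H$) by some vertex of $T_i$. *)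

From mathcomp Require Import all_boot.
Set Implicit Arguments. Unset Strict Implicit. Unset Printing Implicit Defensive.

Definition simple_graph (T : finType) (e : rel T) : Prop :=
  symmetric e /\ irreflexive e.

Definition connected_graph (T : finType) (e : rel T) : Prop :=
  forall x y : T, connect e x y.

Fixpoint ball (T : finType) (e : rel T) (n : nat) (x : T) : {set T} :=
  match n with
  | 0 => [set x]
  | n'.+1 => ball e n' x :|: [set y | [exists z in ball e n' x, e z y]]
  end.

(* shortest-path distance; for unreachable pairs it is the sentinel #|T|,
   which is strictly larger than every finite distance *)
Definition dist (T : finType) (e : rel T) (x y : T) : nat :=
  find (fun n => y \in ball e n x) (iota 0 #|T|).

Definition distinguishes (T : finType) (e : rel T) (w u v : T) : bool :=
  dist e w u != dist e w v.

Definition local_resolving (T : finType) (e : rel T) (W : {set T}) : bool :=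
  [forall u : T, forall v : T, e u v ==> [exists w in W, distinguishes e w u v]].

Definition dim_l (T : finType) (e : rel T) : nat :=
  \big[minn/#|T|]_(W : {set T} | local_resolving e W) #|W|.

Definition local_metric_basis (T : finType) (e : rel T) (W : {set T}) : Prop :=
  local_resolving e W /\ #|W| = dim_l e.

Section Amalgam.
Variables (I : finType) (V : I -> finType) (VJ : finType)
          (iota : forall i, VJ -> V i).

(* vertices of H: one copy of V(J), plus, for each i, the vertices of G_i
   outside J_i *)
Definition amalg_vertex : finType :=
  (VJ + {i : I & {v : V i | v \notin codom (iota i)}})%type.

Lemma pick_none_notin (i : I) (v : V i) :
  [pick x | iota i x == v] = None -> v \notin codom (iota i).
Proof.
move=> h; apply/negP => /codomP [x ex].
by case: pickP h => // /(_ x); rewrite ex eqxx.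
Qed.

Definition emb (i : I) (v : V i) : amalg_vertex :=
  match [pick x | iota i x == v] as o
        return ([pick x | iota i x == v] = o -> amalg_vertex) with
  | Some x => fun _ => inl x
  | None => fun h => inr (existT _ i (exist _ v (pick_none_notin h)))
  end erefl.

Definition amalg_edge (G : forall i, rel (V i)) : rel amalg_vertex :=
  fun u w => [exists i : I, [exists a : V i, [exists b : V i,
                [&& G i a b, emb a == u & emb b == w]]]].

End Amalgam.

Arguments amalg_edge [I V VJ] iota G _ _.

Definition in_J (VJ : finType) (W : finType) (f : VJ -> W) (v : W) : bool :=
  v \in codom f.

Definition parallel_edge (VJ W : finType) (G : rel W) (f : VJ -> W) (u v : W)
  : bool :=
  [&& G u v, u \notin codom f, v \notin codom f &
      [forall x : VJ, dist G (f x) u == dist G (f x) v]].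

Definition traversal_cover (I : finType) (V : I -> finType) (VJ : finType)
  (iota : forall i, VJ -> V i) (G : forall i, rel (V i)) (i : I)
  (T : {set V i}) : Prop :=
  T \subset [set v | v \notin codom (iota i)] /\
  forall u v : V i, parallel_edge (G i) (iota i) u v ->
    exists2 t, t \in T &
      distinguishes (amalg_edge iota G) (emb iota t) (emb iota u) (emb iota v).

Definition traversal (I : finType) (V : I -> finType) (VJ : finType)
  (iota : forall i, VJ -> V i) (G : forall i, rel (V i)) (i : I)
  (T : {set V i}) : Prop :=
  traversal_cover iota G T /\
  forall T' : {set V i}, traversal_cover iota G T' -> #|T| <= #|T'|.

Definition isometric_family (I : finType) (V : I -> finType) (VJ : finType)
  (iota : forall i, VJ -> V i) (G : forall i, rel (V i)) : Prop :=
  forall (i j : I) (a b : VJ),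
    dist (G i) (iota i a) (iota i b) = dist (G j) (iota j a) (iota j b).

Definition induced_embedding (VJ W : finType) (EJ : rel VJ) (G : rel W)
  (f : VJ -> W) : Prop :=
  injective f /\ forall x y : VJ, G (f x) (f y) = EJ x y.

From Pilot Require Import Defs.
From mathcomp Require Import all_boot.
From Stdlib Require Import Classical_Prop.
Set Implicit Arguments. Unset Strict Implicit. Unset Printing Implicit Defensive.

(* Distances in H from a vertex p of G_k can be computed: they agree with the
   distances of G_k inside G_k, and a vertex q of G_j - J_j (j <> k) is reached
   by the shortest route through J, min_x d(p,x) + d(x,q).  In particular each
   G_i sits isometrically in H, so the union of local metric bases of the G_i
   resolves H locally, whence <=.  Conversely, an edge of ||(J_i : G_i) is
   distinguished neither by a vertex of J nor by a vertex of another G_j, whose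
   distances to it factor through J.  So a local metric basis of H meets each
   G_i - J_i in a set covering ||(J_i : G_i), which contains a traversal and
   hence, by hypothesis, a local metric basis of G_i; these traces are disjoint,
   whence >=. *)

Section BigMin.
Variables (I : finType) (P : pred I) (d : nat).

Lemma geq_bigmin_cond (F : I -> nat) i : P i -> \big[minn/d]_(j | P j) F j <= F i.
Proof.
move=> Pi; have : i \in index_enum I by rewrite mem_index_enum.
elim: (index_enum I) => // a r IHr; rewrite inE big_cons => /predU1P [<-|/IHr].
  by rewrite Pi geq_minl.
by case: (P a) => // ri; rewrite geq_min ri orbT.
Qed.

Lemma geq_bigmin_idx (F : I -> nat) : \big[minn/d]_(j | P j) F j <= d.
Proof. by elim/big_rec: _ => // i m _ hm; rewrite geq_min hm orbT. Qed.

Lemma leq_bigmin (F : I -> nat) m :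
  m <= d -> (forall i, P i -> m <= F i) -> m <= \big[minn/d]_(j | P j) F j.
Proof. by move=> md mF; elim/big_ind: _ => // a b ma mb; rewrite leq_min ma mb. Qed.

Lemma leq_bigmin_add (F F' : I -> nat) c :
  (forall i, F i <= F' i + c) ->
  \big[minn/d]_(j | P j) F j <= \big[minn/d]_(j | P j) F' j + c.
Proof.
move=> FF'; elim/big_ind2: _ => [|a1 a2 b1 b2 h1 h2|i _]; rewrite ?leq_addr //.
by rewrite addn_minl leq_min !geq_min h1 h2 orbT.
Qed.

End BigMin.

Section CardBigcup.
Variables (I T : finType) (F : I -> {set T}).

Lemma card_bigcup_leq : #|\bigcup_i F i| <= \sum_i #|F i|.
Proof.
elim/big_rec2: _ => [|i A n _ An]; first by rewrite cards0.
by apply: leq_trans (leq_card_setU _ _).1 _; rewrite leq_add2l.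
Qed.

Lemma card_bigcup_disjoint :
  (forall i j, i != j -> [disjoint F i & F j]) -> #|\bigcup_i F i| = \sum_i #|F i|.
Proof.
move=> disjF; rewrite -sum1_card (partition_disjoint_bigcup _ _ disjF).
by apply: eq_bigr => i _; rewrite sum1_card.
Qed.

End CardBigcup.

Lemma exists_min_card (T : finType) (P : {set T} -> Prop) X :
  P X -> exists2 Y, P Y & forall Z, P Z -> #|Y| <= #|Z|.
Proof.
elim: {X}#|X|.+1 {-2}X (ltnSn #|X|) => // n IHn X ltXn PX.
have [[Z PZ ltZX]|noZ] := classic (exists2 Z, P Z & #|Z| < #|X|).
  by apply: (IHn Z) => //; apply: leq_trans ltZX _; rewrite -ltnS.
exists X => // Z PZ; rewrite leqNgt; apply/negP => ltZX; by apply: noZ; exists Z.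
Qed.

Section GraphDistance.
Variables (T : finType) (e : rel T).

Lemma ballS n x y :
  (y \in ball e n.+1 x) = (y \in ball e n x) || [exists z in ball e n x, e z y].
Proof. by rewrite /= !inE. Qed.

Lemma ball_add m n x y z :
  y \in ball e m x -> z \in ball e n y -> z \in ball e (m + n) x.
Proof.
move=> xy; elim: n z => [|n IHn] z; first by rewrite addn0 => /set1P ->.
rewrite addnS !ballS => /orP [/IHn -> //|/exists_inP [w yw ewz]].
by apply/orP; right; apply/exists_inP; exists w; rewrite ?IHn.
Qed.

Lemma mem_ball1 x y : e x y -> y \in ball e 1 x.
Proof.
by move=> exy; rewrite ballS; apply/orP; right; apply/exists_inP; exists x; rewrite ?set11.
Qed.

Lemma dist_leq_card x y : dist e x y <= #|T|.
Proof. by apply: leq_trans (find_size _ _) _; rewrite size_iota. Qed.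

Lemma mem_ball_dist x y : dist e x y < #|T| -> y \in ball e (dist e x y) x.
Proof.
move=> lt_d; have hasd : has (fun n => y \in ball e n x) (iota 0 #|T|).
  by rewrite has_find size_iota.
by have := nth_find 0 hasd; rewrite nth_iota.
Qed.

Lemma dist_leq_ball n x y : y \in ball e n x -> dist e x y <= n.
Proof.
move=> xy; have [ltnT|] := ltnP n #|T|; last exact: leq_trans (dist_leq_card x y).
rewrite leqNgt; apply/negP => /(before_find 0); rewrite nth_iota ?add0n ?xy //.
Qed.

Lemma distxx x : dist e x x = 0.
Proof. by apply/eqP; rewrite -leqn0; apply: (@dist_leq_ball 0); rewrite /= set11. Qed.

Lemma dist_eq0 x y : (dist e x y == 0) = (x == y).
Proof.
apply/eqP/eqP => [d0|<-]; last exact: distxx.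
have : dist e x y < #|T| by rewrite d0; apply/card_gt0P; exists x.
by move/mem_ball_dist; rewrite d0 => /set1P.
Qed.

Lemma dist_triangle x y z : dist e x z <= dist e x y + dist e y z.
Proof.
have [xy|] := ltnP (dist e x y) #|T|; last first.
  by move/(leq_trans (dist_leq_card x z))/leq_trans; apply; rewrite leq_addr.
have [yz|] := ltnP (dist e y z) #|T|; last first.
  by move/(leq_trans (dist_leq_card x z))/leq_trans; apply; rewrite leq_addl.
exact/dist_leq_ball/(ball_add (mem_ball_dist xy) (mem_ball_dist yz)).
Qed.

Lemma dist_edge x y z : e y z -> dist e x z <= dist e x y + 1.
Proof.
move=> eyz; apply: leq_trans (dist_triangle x y z) _.
by rewrite leq_add2l; apply/dist_leq_ball/mem_ball1.
Qed.

Lemma connect_dist_lt x y : connect e x y -> dist e x y < #|T|.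
Proof.
have mem_ball_last z p : path e z p -> last z p \in ball e (size p) z.
  elim: p z => [|z' p IHp] z; first by rewrite set11.
  by case/andP => /mem_ball1 zz' /IHp; exact: ball_add zz'.
case/connectP => p xp ->; case: (shortenP xp) => p' xp' uniq_p' _.
apply: leq_ltn_trans (dist_leq_ball (mem_ball_last _ _ xp')) _.
by have := max_card (mem (x :: p')); rewrite (card_uniqP uniq_p').
Qed.

Lemma leq_dist_lipschitz (f : T -> nat) x :
  f x = 0 -> (forall u v, e u v -> f v <= f u + 1) -> (forall y, f y <= #|T|) ->
  forall y, f y <= dist e x y.
Proof.
move=> fx0 f_lip f_bnd.
have f_ball n z : z \in ball e n x -> f z <= n.
  elim: n z => [|n IHn] z; first by move/set1P ->; rewrite fx0.
  rewrite ballS => /orP [/IHn/leqW //|/exists_inP [w xw ewz]].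
  by apply: leq_trans (f_lip _ _ ewz) _; rewrite addn1 ltnS IHn.
move=> y; have [lt_d|] := ltnP (dist e x y) #|T|; first exact/f_ball/mem_ball_dist.
exact: leq_trans (f_bnd y).
Qed.

Lemma dim_l_leq W : local_resolving e W -> dim_l e <= #|W|.
Proof. exact: geq_bigmin_cond. Qed.

Lemma local_metric_basis_arg_min W :
  local_resolving e W -> local_metric_basis e [arg min_(X < W | local_resolving e X) #|X|].
Proof.
move=> resW; case: arg_minnP => // B resB minB; split => //.
apply/eqP; rewrite eqn_leq dim_l_leq // andbT.
by apply: leq_bigmin => [|X /minB //]; apply: max_card.
Qed.

Lemma local_resolving_setT : irreflexive e -> local_resolving e [set: T].
Proof.
move=> irr_e; apply/'forall_forallP => u v; apply/implyP => euv.
apply/exists_inP; exists u; rewrite ?inE // /distinguishes distxx eq_sym dist_eq0.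
by apply: contraTneq euv => ->; rewrite irr_e.
Qed.

End GraphDistance.

Section Amalgam.
Variables (I : finType) (V : I -> finType) (G : forall i, rel (V i)).
Arguments G : clear implicits.
Variables (VJ : finType) (iota : forall i, VJ -> V i).
Hypothesis iota_inj : forall i, injective (iota i).
Hypothesis G_connected : forall i, connected_graph (G i).
Hypothesis G_isometric : isometric_family iota G.

Local Notation H := (amalg_vertex iota).
Local Notation EH := (amalg_edge iota G).
Local Notation dH := (dist EH).
Local Notation emb := (emb iota).

Lemma emb_iota i x : emb (iota i x) = inl x.
Proof.
rewrite /Defs.emb; move: (@pick_none_notin I V VJ iota i (iota i x)).
by case: pickP => [y /eqP /iota_inj -> //|/(_ x)]; rewrite eqxx.
Qed.

Lemma emb_notin i v (v_out : v \notin codom (iota i)) :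
  emb v = inr (existT _ i (exist _ v v_out)).
Proof.
rewrite /Defs.emb; move: (@pick_none_notin I V VJ iota i v).
case: pickP => [y /eqP yv|_] none_out; first by exfalso; move: v_out; rewrite -yv codom_f.
by rewrite (bool_irrelevance (none_out _) v_out).
Qed.

Lemma emb_inj i : injective (@Defs.emb I V VJ iota i).
Proof.
move=> a b.
have [/codomP [x ->]|a_out] := boolP (a \in codom (iota i));
have [/codomP [y ->]|b_out] := boolP (b \in codom (iota i));
rewrite ?emb_iota ?emb_notin //; first by case=> ->.
by case=> /eqP; rewrite -tag_eqE /tag_eq eqxx tagged_asE => /eqP.
Qed.

Lemma card_leq_amalg k : #|V k| <= #|H|.
Proof. by rewrite -cardsT -(card_imset _ (@emb_inj k)); apply: max_card. Qed.

Lemma amalg_edge_emb i a b : G i a b -> EH (emb a) (emb b).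
Proof.
move=> gab; apply/existsP; exists i; apply/existsP; exists a; apply/existsP; exists b.
by rewrite gab !eqxx.
Qed.

Lemma amalg_edgeP u w :
  EH u w -> exists i (a b : V i), [/\ G i a b, u = emb a & w = emb b].
Proof.
case/existsP => i /existsP [a /existsP [b /and3P [gab /eqP <- /eqP <-]]].
by exists i, a, b.
Qed.

Lemma amalg_irreflexive : (forall i, irreflexive (G i)) -> irreflexive EH.
Proof.
move=> G_irr u; apply/negbTE/negP => /amalg_edgeP [i [a [b [gab -> /emb_inj ab]]]].
by rewrite ab G_irr in gab.
Qed.

Lemma dist_amalg_leq k (a b : V k) : dH (emb a) (emb b) <= dist (G k) a b.
Proof.
have emb_ball n c : c \in ball (G k) n a -> emb c \in ball EH n (emb a).
  elim: n c => [|n IHn] c; first by move/set1P ->; rewrite set11.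
  rewrite !ballS => /orP [/IHn -> //|/exists_inP [z az gzc]].
  by apply/orP; right; apply/exists_inP; exists (emb z); rewrite ?IHn ?amalg_edge_emb.
exact/dist_leq_ball/emb_ball/mem_ball_dist/connect_dist_lt/G_connected.
Qed.

Section Potential.
Variables (k : I) (p : V k).

Definition dist_via_J j (v : V j) : nat :=
  \big[minn/#|H|]_x (dist (G k) p (iota k x) + dist (G j) (iota j x) v).

Definition potential_at j (v : V j) : nat :=
  if k =P j is ReflectT e then dist (G j) (ecast j (V j) e p) v else dist_via_J v.

(* The candidate value of [dH (emb p) h]; being 1-Lipschitz on [H] and zero at
   [emb p], it bounds that distance from below. *)
Definition potential (h : H) : nat :=
  match h with
  | inl x => dist (G k) p (iota k x)
  | inr s => potential_at (sval (tagged s))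
  end.

Lemma potential_at_id (v : V k) : potential_at v = dist (G k) p v.
Proof. by rewrite /potential_at; case: eqP => // e; rewrite (eq_irrelevance e erefl). Qed.

Lemma potential_at_neq j (v : V j) : k != j -> potential_at v = dist_via_J v.
Proof. by rewrite /potential_at; case: eqP. Qed.

Lemma dist_via_J_iota j x : dist_via_J (iota j x) = dist (G k) p (iota k x).
Proof.
apply/eqP; rewrite eqn_leq; apply/andP; split.
  by apply: leq_trans (@geq_bigmin_cond _ predT _ _ x isT) _; rewrite distxx addn0.
apply: leq_bigmin => [|y _]; first exact: leq_trans (dist_leq_card _ _ _) (card_leq_amalg k).
by rewrite -(G_isometric k j); apply: dist_triangle.
Qed.

Lemma potential_emb j (v : V j) : potential (emb v) = potential_at v.
Proof.
have [/codomP [x ->]|v_out] := boolP (v \in codom (iota j)); last by rewrite emb_notin.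
rewrite emb_iota /=; have [<-|neq_kj] := eqVneq k j; first by rewrite potential_at_id.
by rewrite potential_at_neq // dist_via_J_iota.
Qed.

Lemma potential_leq_dist h : potential h <= dH (emb p) h.
Proof.
apply: leq_dist_lipschitz => [|u w /amalg_edgeP [j [a [b [gab -> ->]]]]|[x|[j [v v_out]]] /=].
- by rewrite potential_emb potential_at_id distxx.
- rewrite !potential_emb; have [e|neq_kj] := eqVneq k j.
    by subst j; rewrite !potential_at_id; apply: dist_edge gab.
  rewrite !potential_at_neq //; apply: leq_bigmin_add => x.
  by rewrite -addnA leq_add2l; apply: dist_edge gab.
- exact: leq_trans (dist_leq_card _ _ _) (card_leq_amalg k).
- have [e|neq_kj] := eqVneq k j; last by rewrite potential_at_neq //; apply: geq_bigmin_idx.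
  by subst j; rewrite potential_at_id; apply: leq_trans (dist_leq_card _ _ _) (card_leq_amalg k).
Qed.

Lemma dist_amalg_emb (q : V k) : dH (emb p) (emb q) = dist (G k) p q.
Proof.
apply/eqP; rewrite eqn_leq dist_amalg_leq /=.
by have := potential_leq_dist (emb q); rewrite potential_emb potential_at_id.
Qed.

Lemma dist_amalg_cross j (q : V j) :
  k != j -> q \notin codom (iota j) -> dH (emb p) (emb q) = dist_via_J q.
Proof.
move=> neq_kj q_out; apply/eqP; rewrite eqn_leq; apply/andP; split; last first.
  by have := potential_leq_dist (emb q); rewrite potential_emb potential_at_neq.
apply: leq_bigmin => [|x _]; first exact: dist_leq_card.
apply: leq_trans (dist_triangle _ _ (inl x) _) (leq_add _ _).
  by rewrite -(emb_iota k x); apply: dist_amalg_leq.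
by rewrite -(emb_iota j x); apply: dist_amalg_leq.
Qed.

End Potential.

Lemma distinguishes_parallel_edge i (u v : V i) w :
  parallel_edge (G i) (iota i) u v -> distinguishes EH w (emb u) (emb v) ->
  exists2 t, t \notin codom (iota i) & w = emb t.
Proof.
case/and4P => _ u_out v_out /forallP uv_par; rewrite /distinguishes.
case: w => [x|[j [t t_out]]].
  by rewrite -(emb_iota i x) !dist_amalg_emb (eqP (uv_par x)) eqxx.
case: (eqVneq j i) => [e|neq_ji]; first by subst i; exists t; rewrite ?emb_notin.
rewrite -(emb_notin t_out) !dist_amalg_cross // /dist_via_J.
by under eq_bigr => x _ do rewrite (eqP (uv_par x)); rewrite eqxx.
Qed.

Lemma local_resolving_amalg (B : forall i, {set V i}) :
  (forall i, local_resolving (G i) (B i)) ->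
  local_resolving EH (\bigcup_i [set emb v | v in B i]).
Proof.
move=> resB; apply/'forall_forallP => u w; apply/implyP.
case/amalg_edgeP => i [a [b [gab -> ->]]].
have /'forall_forallP /(_ a b) /implyP /(_ gab) /exists_inP [t Bt dt] := resB i.
apply/exists_inP; exists (emb t); last by rewrite /distinguishes !dist_amalg_emb.
by apply/bigcupP; exists i => //; apply: imset_f.
Qed.

Lemma dim_l_amalg_leq : (forall i, irreflexive (G i)) -> dim_l EH <= \sum_i dim_l (G i).
Proof.
move=> G_irr; pose B i := [arg min_(X < [set: V i] | local_resolving (G i) X) #|X|].
have basisB i : local_metric_basis (G i) (B i).
  exact/local_metric_basis_arg_min/local_resolving_setT.
apply: leq_trans (dim_l_leq (local_resolving_amalg (fun i => (basisB i).1))) _.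
apply: leq_trans (card_bigcup_leq _) _; apply: leq_sum => i _.
by rewrite -(basisB i).2; apply: leq_imset_card.
Qed.

Definition amalg_trace (W : {set H}) i : {set V i} :=
  [set v | (v \notin codom (iota i)) && (emb v \in W)].

Lemma traversal_cover_amalg_trace W i :
  local_resolving EH W -> traversal_cover iota G (amalg_trace W i).
Proof.
move=> resW; split=> [|u v uv_par]; first by apply/subsetP => v; rewrite !inE => /andP [].
have /amalg_edge_emb euv : G i u v by case/and4P: uv_par.
have /'forall_forallP /(_ _ _) /implyP /(_ euv) /exists_inP [w Ww dw] := resW.
have [t t_out wt] := distinguishes_parallel_edge uv_par dw.
by exists t; rewrite -?wt // inE t_out -wt.
Qed.

Lemma dim_l_leq_card_amalg_trace W i :
  (forall T : {set V i}, traversal iota G T ->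
     exists2 B : {set V i}, B \subset T & local_metric_basis (G i) B) ->
  local_resolving EH W -> dim_l (G i) <= #|amalg_trace W i|.
Proof.
move=> traversal_basis /(traversal_cover_amalg_trace i) cover_trace.
have [T cover_T min_T] := exists_min_card cover_trace.
have [B sub_BT [_ <-]] := traversal_basis T (conj cover_T min_T).
exact: leq_trans (subset_leq_card sub_BT) (min_T _ cover_trace).
Qed.

Lemma sum_dim_l_leq_amalg :
  (forall i, irreflexive (G i)) ->
  (forall (i : I) (T : {set V i}), traversal iota G T ->
     exists2 B : {set V i}, B \subset T & local_metric_basis (G i) B) ->
  \sum_i dim_l (G i) <= dim_l EH.
Proof.
move=> G_irr traversal_basis; pose W := [arg min_(X < [set: H] | local_resolving EH X) #|X|].
have [resW <-] : local_metric_basis EH W.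
  exact/local_metric_basis_arg_min/local_resolving_setT/amalg_irreflexive.
pose S i := [set emb v | v in amalg_trace W i].
have disjS i j : i != j -> [disjoint S i & S j].
  move=> neq_ij; rewrite -setI_eq0; apply/eqP/setP => h; rewrite !inE.
  apply/negP => /andP [/imsetP [a] /setIdP [a_out _] -> /imsetP [b] /setIdP [b_out _]].
  by rewrite emb_notin emb_notin => -[ij _]; rewrite ij eqxx in neq_ij.
apply: (@leq_trans (\sum_i #|S i|)).
  apply: leq_sum => i _; rewrite card_imset; last exact: emb_inj.
  exact: dim_l_leq_card_amalg_trace (traversal_basis i) resW.
rewrite -card_bigcup_disjoint //; apply/subset_leq_card/bigcupsP => i _.
by apply/subsetP => _ /imsetP [v /setIdP [_ Wv] ->].
Qed.

End Amalgam.

Theorem lemma7 (I : finType) (V : I -> finType) (G : forall i, rel (V i))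
  (VJ : finType) (EJ : rel VJ) (iota : forall i, VJ -> V i) :
  simple_graph EJ ->
  (forall i, simple_graph (G i)) ->
  (forall i, connected_graph (G i)) ->
  (forall i, induced_embedding EJ (G i) (iota i)) ->
  isometric_family iota G ->
  (forall (i : I) (T : {set V i}), traversal iota G T ->
     exists2 B : {set V i}, B \subset T & local_metric_basis (G i) B) ->
  dim_l (amalg_edge iota G) = \sum_(i : I) dim_l (G i).
Proof.
move=> _ G_simple G_connected J_induced G_isometric traversal_basis.
have iota_inj i : injective (iota i) := (J_induced i).1.
have G_irr i : irreflexive (G i) := (G_simple i).2.
apply/eqP; rewrite eqn_leq.
rewrite (dim_l_amalg_leq iota_inj G_connected G_isometric G_irr).
exact: (sum_dim_l_leq_amalg iota_inj G_connected G_isometric G_irr traversal_basis).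
Qed.
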